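(* The Minkowski sum $X+I$ of a closed $\ell_1$-convex set $X\subseteq\mathbb{R}^n$ and an interval $I\subseteq\mathbb{R}^n$ is $\ell_1$-convex.
   Context: A subset $X\subseteq\mathbb{R}^n$ is $\ell_1$-convex if for all $x,x'\in X$, with $D=\sum_i|x_i-x'_i|$, there is $\gamma\colon[0,D]\to X$ with $\gamma(0)=x,\gamma(D)=x'$ and $\sum_i|\gamma_i(t)-\gamma_i(t')|=|t-t'|$ for all $t,t'$. An interval in $\mathbb{R}^n$ is a set $\prod_{i=1}^n I_i$ with each $I_i\subseteq\mathbb{R}$ a (possibly empty, possibly unbounded) interval. *)

From HB Require Import structures.
From mathcomp Require Import all_boot all_order all_algebra.
From mathcomp Require Import all_classical all_reals all_analysis.
Set Implicit Arguments. Unset Strict Implicit. Unset Printing Implicit Defensive.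
Import Order.TTheory GRing.Theory Num.Theory.
Import numFieldNormedType.Exports.
Local Open Scope classical_set_scope.
Local Open Scope ring_scope.

Definition l1dist {R : realType} {n : nat} (x y : 'rV[R]_n) : R :=
  \sum_(i < n) `|x ord0 i - y ord0 i|.

Definition l1_convex {R : realType} {n : nat} (X : set 'rV[R]_n) : Prop :=
  forall x x' : 'rV[R]_n, X x -> X x' ->
    exists gamma : R -> 'rV[R]_n,
      gamma 0 = x /\ gamma (l1dist x x') = x' /\
      (forall t, 0 <= t <= l1dist x x' -> X (gamma t)) /\
      (forall t t', 0 <= t <= l1dist x x' -> 0 <= t' <= l1dist x x' ->
         l1dist (gamma t) (gamma t') = `|t - t'|).

(* An interval in R^n: product of (possibly empty, possibly unbounded) real
   intervals, each given as a MathComp interval. *)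
Definition box {R : realType} {n : nat} (I : 'I_n -> interval R) : set 'rV[R]_n :=
  [set z | forall i : 'I_n, z ord0 i \in I i].

Definition minkowski_sum {R : realType} {n : nat} (X Y : set 'rV[R]_n) : set 'rV[R]_n :=
  [set z | exists x y, X x /\ Y y /\ z = x + y].

From HB Require Import structures.
From mathcomp Require Import all_boot all_order all_algebra.
From mathcomp Require Import all_classical all_reals all_analysis.
From mathcomp Require Import ring lra.
Import Order.TTheory GRing.Theory Num.Theory.
Import numFieldNormedType.Exports.
Local Open Scope classical_set_scope.
Local Open Scope ring_scope.

Set Implicit Arguments.
Unset Strict Implicit.
Unset Printing Implicit Defensive.

(* Write z = x + y and z' = x' + y' with x, x' in X and y, y' in the box I.
   Follow an l1-geodesic gamma from x to x' inside X and let the box component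
   move, coordinate by coordinate, inside the segment [y_j, y'_j] so as to
   cancel the motion of gamma_j against the direction of y'_j - y_j, spreading
   the remaining displacement linearly.  Every coordinate of the sum then moves
   monotonically from z_j to z'_j, so the path has l1-length l1dist z z', and
   its reparametrization by arc length (intermediate value theorem) is an
   l1-geodesic in X + I. *)

Ltac no_minmax t := lazymatch t with
  | context [Num.min _ _] => fail | context [Num.max _ _] => fail
  | context [`|_|] => fail | _ => idtac end.

Ltac case_minmax := repeat match goal with
  | |- context [Num.min ?a ?b] => no_minmax a; no_minmax b;
      let h := fresh "h" in have [h|h] := leP a b;
      [rewrite ?(min_l h) | rewrite ?(min_r (ltW h))]
  | |- context [Num.max ?a ?b] => no_minmax a; no_minmax b;
      let h := fresh "h" in have [h|h] := leP a b;
      [rewrite ?(max_r h) | rewrite ?(max_l (ltW h))]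
  | |- context [`|?e|] => no_minmax e;
      let h := fresh "h" in have [h|h] := leP 0 e;
      [rewrite ?(ger0_norm h) | rewrite ?(ltr0_norm h)]
  end.

Section Between.
Variable R : realDomainType.
Implicit Types (a b c d p q r s t : R) (f : R -> R).

Definition between p q r := (p <= q /\ q <= r) \/ (r <= q /\ q <= p).

Lemma between_distE p q r : `|p - r| = `|p - q| + `|q - r| <-> between p q r.
Proof. by rewrite /between; split; case_minmax; lra. Qed.

Lemma between_addl c p q r : between p q r -> between (c + p) (c + q) (c + r).
Proof. rewrite /between; lra. Qed.

Lemma between_scale s d : 0 <= s <= 1 -> between 0 (s * d) d.
Proof.
move=> /andP[s0 s1]; rewrite /between.
have [d0|d0] := leP 0 d.
  by left; rewrite mulr_ge0 // ler_piMl.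
by right; rewrite mulr_ge0_le0 ?ler_niMl ?(ltW d0).
Qed.

Lemma between_in_itv (i : interval R) p q r :
  p \in i -> r \in i -> between p q r -> q \in i.
Proof.
move=> pi ri [[pq qr] | [rq qp]].
  by apply: (interval_is_interval pi ri); rewrite pq qr.
by apply: (interval_is_interval ri pi); rewrite rq qp.
Qed.

(* On an interval, preserving betweenness of ordered triples is monotonicity. *)
Definition monotone_on a b f := forall t1 t2 t3,
  a <= t1 -> t1 <= t2 -> t2 <= t3 -> t3 <= b -> between (f t1) (f t2) (f t3).

Lemma monotone_on_chain a b f t t' : monotone_on a b f ->
  a <= t -> t <= t' -> t' <= b ->
  (f a <= f t /\ f t <= f t' /\ f t' <= f b) \/
  (f b <= f t' /\ f t' <= f t /\ f t <= f a).
Proof.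
move=> fmono le_at le_tt' le_t'b.
have := fmono a t t' (lexx a) le_at le_tt' le_t'b.
have := fmono a t' b (lexx a) (le_trans le_at le_tt') le_t'b (lexx b).
rewrite /between; lra.
Qed.

Lemma monotone_on_scale d f : 0 <= d -> monotone_on 0 d f ->
  monotone_on 0 1 (fun s => f (s * d)).
Proof.
move=> d0 fmono t1 t2 t3 t10 t12 t23 t31.
by apply: fmono; rewrite ?mulr_ge0 ?ler_wpM2r ?ler_piMl.
Qed.

End Between.

Section Clamp.
Variable R : realDomainType.
Implicit Types (a b t u : R).

(* The nearest point to [t] on the segment with endpoints [0] and [b]. *)
Definition clamp b t := Num.min (Num.max t (Num.min 0 b)) (Num.max 0 b).

Lemma clamp0 b : clamp b 0 = 0.
Proof. by rewrite /clamp; case_minmax; lra. Qed.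

Lemma clamp_between b t : between 0 (clamp b t) b.
Proof. by rewrite /clamp /between; case_minmax; lra. Qed.

Lemma clamp_id b t : between 0 t b -> clamp b t = t.
Proof. by rewrite /clamp /between; case_minmax; lra. Qed.

Lemma clamp_le b t t' : t <= t' -> clamp b t <= clamp b t'.
Proof. by rewrite /clamp; case_minmax; lra. Qed.

Lemma clamp_subr_le b t t' : t <= t' -> clamp b t' - clamp b t <= t' - t.
Proof. by rewrite /clamp; case_minmax; lra. Qed.

Lemma clamp_dist b t t' : `|clamp b t - clamp b t'| <= `|t - t'|.
Proof.
wlog le_tt' : t t' / t <= t'.
  by move=> wl; have [/wl //|/ltW/wl] := leP t t'; rewrite distrC [`|t - _|]distrC.
rewrite distrC [`|t - _|]distrC !ger0_norm ?subr_ge0 ?clamp_le //.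
exact: clamp_subr_le.
Qed.

Lemma between_clamp b t1 t2 t3 :
  between t1 t2 t3 -> between (clamp b t1) (clamp b t2) (clamp b t3).
Proof. by case=> -[h12 h23]; [left | right]; split; apply: clamp_le. Qed.

Definition deadzone b u := u + clamp b (- u).

Lemma deadzone_le b u u' : u <= u' -> deadzone b u <= deadzone b u'.
Proof. by rewrite /deadzone /clamp; case_minmax; lra. Qed.

Lemma deadzone_eq0 b a u : between 0 (- a) b -> between 0 u a -> deadzone b u = 0.
Proof.
move=> hab hua; rewrite /deadzone clamp_id ?subrr //.
by move: hab hua; rewrite /between; lra.
Qed.

Lemma between_clamp_opp b a :
  (0 <= a /\ b - clamp b (- a) < 0) \/ (a <= 0 /\ 0 < b - clamp b (- a)) ->
  between 0 (- a) b.
Proof. by rewrite /clamp /between; case_minmax; lra. Qed.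

(* If the drift [r] points against the motion of [u], the deadzone swallows
   that motion entirely; otherwise both summands move the same way. *)
Lemma between_deadzone_drift b a u1 u2 u3 s1 s2 s3 :
  0 <= s1 -> s1 <= s2 -> s2 <= s3 -> s3 <= 1 ->
  (0 <= u1 /\ u1 <= u2 /\ u2 <= u3 /\ u3 <= a) \/
  (a <= u3 /\ u3 <= u2 /\ u2 <= u1 /\ u1 <= 0) ->
  let r := b - clamp b (- a) in
  between (deadzone b u1 + s1 * r) (deadzone b u2 + s2 * r)
          (deadzone b u3 + s3 * r).
Proof.
move=> s10 s12 s23 s31 hu r.
case: hu => [[h1 [h2 [h3 h4]]] | [h1 [h2 [h3 h4]]]].
  have [r0|r0] := leP 0 r.
    have m12 := ler_wpM2r r0 s12.
    have m23 := ler_wpM2r r0 s23.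
    have := deadzone_le b h2; have := deadzone_le b h3; rewrite /between; lra.
  have m12 := ler_wnM2r (ltW r0) s12.
  have m23 := ler_wnM2r (ltW r0) s23.
  have hab : between 0 (- a) b by apply: between_clamp_opp; rewrite -/r; lra.
  by rewrite !(deadzone_eq0 hab) /between; lra.
have [r0|r0] := leP r 0.
  have m12 := ler_wnM2r r0 s12.
  have m23 := ler_wnM2r r0 s23.
  have := deadzone_le b h2; have := deadzone_le b h3; rewrite /between; lra.
have m12 := ler_wpM2r (ltW r0) s12.
have m23 := ler_wpM2r (ltW r0) s23.
have hab : between 0 (- a) b by apply: between_clamp_opp; rewrite -/r; lra.
by rewrite !(deadzone_eq0 hab) /between; lra.
Qed.

End Clamp.

Section CompensatingPath.
Variables (R : realDomainType) (p : R -> R) (y0 y1 : R).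

Let b := y1 - y0.
Let r := b - clamp b (p 0 - p 1).

(* Moving along [p], the second coordinate cancels as much of the motion of
   [p] against the direction from [y0] to [y1] as the segment [y0, y1] allows;
   the remaining displacement [r] is spread evenly over [0, 1]. *)
Definition compensating_path s := y0 + clamp b (p 0 - p s) + s * r.

Lemma compensating_path0 : compensating_path 0 = y0.
Proof. by rewrite /compensating_path subrr clamp0 mul0r !addr0. Qed.

Lemma compensating_path1 : compensating_path 1 = y1.
Proof. by rewrite /compensating_path mul1r /r /b; ring. Qed.

Lemma compensating_path_dist s s' :
  `|compensating_path s - compensating_path s'| <= `|p s - p s'| + `|r| * `|s - s'|.
Proof.
have -> : compensating_path s - compensating_path s' =
    (clamp b (p 0 - p s) - clamp b (p 0 - p s')) + (s - s') * r.
  by rewrite /compensating_path; ring.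
apply: le_trans (ler_normD _ _) _; rewrite normrM mulrC lerD2r.
apply: le_trans (clamp_dist _ _ _) _.
by rewrite (_ : _ - _ = p s' - p s) 1?distrC //; ring.
Qed.

Hypothesis p_mono : monotone_on 0 1 p.

Lemma compensating_path_between s :
  0 <= s <= 1 -> between y0 (compensating_path s) y1.
Proof.
move=> s01; have /andP[s0 s1] := s01.
have hps : between 0 (p 0 - p s) (p 0 - p 1).
  by have := monotone_on_chain p_mono s0 (lexx s) s1; rewrite /between; lra.
have := between_clamp b hps; rewrite clamp0.
have := clamp_between b (p 0 - p 1).
have := between_scale r s01.
have bE : b = y1 - y0 by [].
have rE : r = b - clamp b (p 0 - p 1) by [].
rewrite /compensating_path /between; lra.
Qed.

Lemma monotone_on_add_compensating_path :
  monotone_on 0 1 (fun s => p s + compensating_path s).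
Proof.
move=> t1 t2 t3 t10 t12 t23 t31.
have sumE t : p t + compensating_path t =
    (p 0 + y0) + (deadzone b (p t - p 0) + t * r).
  by rewrite /compensating_path /deadzone opprB; ring.
rewrite !sumE; apply: between_addl.
have -> : r = b - clamp b (- (p 1 - p 0)) by rewrite opprB.
apply: between_deadzone_drift => //.
have := monotone_on_chain p_mono t10 t12 (le_trans t23 t31).
have := monotone_on_chain p_mono (le_trans t10 t12) t23 t31.
lra.
Qed.

End CompensatingPath.

Section L1dist.
Variables (R : realType) (n : nat).
Implicit Types (x y z : 'rV[R]_n) (P : set 'rV[R]_n).

Lemma l1dist_ge0 x y : 0 <= l1dist x y.
Proof. exact: sumr_ge0. Qed.

Lemma l1distC x y : l1dist x y = l1dist y x.
Proof. by apply: eq_bigr => i _; rewrite distrC. Qed.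

Lemma l1distxx x : l1dist x x = 0.
Proof. by rewrite /l1dist big1 // => i _; rewrite subrr normr0. Qed.

Lemma l1dist_eq0 x y : l1dist x y = 0 -> x = y.
Proof.
move=> xy0; apply/rowP => j.
have := psumr_eq0P (fun i _ => normr_ge0 _) xy0 (i := j) isT.
by move=> /eqP; rewrite normr_eq0 subr_eq0 => /eqP.
Qed.

Lemma l1dist_betweenP x y z :
  l1dist x z = l1dist x y + l1dist y z <->
  forall j, between (x ord0 j) (y ord0 j) (z ord0 j).
Proof.
split=> [xyz j | xyz]; last first.
  by rewrite /l1dist -big_split; apply: eq_bigr => j _; apply/between_distE.
pose F i := `|x ord0 i - y ord0 i| + `|y ord0 i - z ord0 i| - `|x ord0 i - z ord0 i|.
have F_ge0 i : xpredT i -> 0 <= F i by rewrite subr_ge0 ler_distD.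
have F_sum0 : \sum_(i < n) F i = 0.
  by rewrite sumrB big_split -!/(l1dist _ _) xyz subrr.
have := psumr_eq0P F_ge0 F_sum0 (i := j) isT.
by rewrite /F => /eqP; rewrite subr_eq0 => /eqP/esym/between_distE.
Qed.

Definition l1_geodesic P x x' (gamma : R -> 'rV[R]_n) :=
  gamma 0 = x /\ gamma (l1dist x x') = x' /\
  (forall t, 0 <= t <= l1dist x x' -> P (gamma t)) /\
  (forall t t', 0 <= t <= l1dist x x' -> 0 <= t' <= l1dist x x' ->
     l1dist (gamma t) (gamma t') = `|t - t'|).

Lemma l1_geodesic_monotone_coord P x x' gamma j :
  l1_geodesic P x x' gamma -> monotone_on 0 (l1dist x x') (fun t => gamma t ord0 j).
Proof.
move=> [_ [_ [_ gamma_dist]]] t1 t2 t3 t10 t12 t23 t3D.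
have [t1_in t2_in t3_in] : [/\ 0 <= t1 <= l1dist x x', 0 <= t2 <= l1dist x x'
    & 0 <= t3 <= l1dist x x'] by split; apply/andP; split; lra.
apply: (l1dist_betweenP _ _ _).1.
by rewrite !gamma_dist //; apply/between_distE; left.
Qed.

End L1dist.

Lemma klipschitz_continuous (K : realFieldType) (V W : normedModType K) (k : K)
    (f : V -> W) : k.-lipschitz f -> continuous f.
Proof.
move=> f_lip x; apply/cvgrPdist_lt => e e0; apply/nbhs_ballP.
have k1 : 0 < `|k| + 1 by rewrite ltr_wpDl.
exists (e / (`|k| + 1)); first by rewrite /= divr_gt0.
move=> y /=; rewrite -ball_normE /= ltr_pdivlMr // => xy.
have := f_lip (x, y) (conj I I); rewrite /=.
have := ler_wpM2r (normr_ge0 (x - y)) (ler_norm k).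
move: xy; rewrite mulrDr mulr1 mulrC.
have := normr_ge0 (x - y).
lra.
Qed.

Lemma ivt_right_inverse (R : realType) (f : R -> R) (a b : R) :
  a <= b -> {within `[a, b], continuous f} ->
  exists g : R -> R, forall v, Num.min (f a) (f b) <= v <= Num.max (f a) (f b) ->
    g v \in `[a, b] /\ f (g v) = v.
Proof.
move=> ab f_cont.
have preimage v : exists c, Num.min (f a) (f b) <= v <= Num.max (f a) (f b) ->
    c \in `[a, b] /\ f c = v.
  have [v_in|_] := boolP (Num.min (f a) (f b) <= v <= Num.max (f a) (f b)).
    by have [c c_in fc] := IVT ab f_cont v_in; exists c.
  by exists a.
have [g gP] := choice preimage; by exists g.
Qed.

Section ArcLength.
Variables (R : realType) (n : nat) (P : set 'rV[R]_n) (w : R -> 'rV[R]_n) (K : R).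
Hypothesis w_mono : forall j, monotone_on 0 1 (fun s => w s ord0 j).
Hypothesis w_lip : forall s s', 0 <= s <= 1 -> 0 <= s' <= 1 ->
  l1dist (w s) (w s') <= K * `|s - s'|.
Hypothesis w_in : forall s, 0 <= s <= 1 -> P (w s).

Let L s := l1dist (w 0) (w s).

Lemma l1dist_monotone_path s s' : 0 <= s <= 1 -> 0 <= s' <= 1 ->
  l1dist (w s) (w s') = `|L s - L s'|.
Proof.
wlog le_ss' : s s' / s <= s'.
  move=> wl s01 s'01; have [/wl|/ltW/wl] := leP s s'; first exact.
  by rewrite l1distC distrC; apply.
move=> /andP[s0 _] /andP[_ s'1].
have -> : L s' = L s + l1dist (w s) (w s').
  by apply/l1dist_betweenP => j; apply: w_mono.
by rewrite opprD addrA subrr sub0r normrN ger0_norm ?l1dist_ge0.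
Qed.

Lemma continuous_length_clamp : continuous (fun s : R => L (clamp 1 s)).
Proof.
have clamp01 (s : R) : 0 <= clamp 1 s <= 1.
  by have := clamp_between 1 s; rewrite /between => h; apply/andP; lra.
have K0 : 0 <= K.
  have h01 : 0 <= (0 : R) <= 1 by rewrite lexx ler01.
  have h11 : 0 <= (1 : R) <= 1 by rewrite lexx ler01.
  have := w_lip h01 h11; rewrite sub0r normrN normr1 mulr1.
  exact: le_trans (l1dist_ge0 _ _).
apply: (@klipschitz_continuous _ _ _ K) => -[s s'] _ /=.
rewrite -l1dist_monotone_path ?clamp01 //.
apply: le_trans (w_lip (clamp01 s) (clamp01 s')) _.
by rewrite ler_wpM2l ?clamp_dist.
Qed.

Lemma monotone_path_l1_geodesic : exists gamma, l1_geodesic P (w 0) (w 1) gamma.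
Proof.
have D0 : 0 <= L 1 := l1dist_ge0 _ _.
have clamp1_id s : 0 <= s <= 1 -> clamp 1 s = s.
  by move=> /andP[s0 s1]; apply: clamp_id; left.
have [sigma sigmaP] := ivt_right_inverse ler01
  (continuous_subspaceT continuous_length_clamp).
have sigma_in v : 0 <= v <= L 1 -> 0 <= sigma v <= 1 /\ L (sigma v) = v.
  move=> v_in; have [] := sigmaP v.
    by rewrite /= clamp0 clamp1_id ?lexx ?ler01 // [L 0]l1distxx min_l ?max_r.
  by rewrite in_itv /= => s_in; rewrite clamp1_id.
exists (fun v => w (sigma v)); split; [|split; [|split]].
- have [|_ L0] := sigma_in 0; first by rewrite lexx D0.
  by apply: l1dist_eq0; rewrite l1distC.
- have [|s_in L1] := sigma_in (L 1); first by rewrite lexx D0.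
  by apply: l1dist_eq0; rewrite l1dist_monotone_path ?lexx ?ler01 // L1 subrr normr0.
- by move=> v /sigma_in[/w_in].
- move=> v v' /sigma_in[s_in Ls] /sigma_in[s'_in Ls'].
  by rewrite l1dist_monotone_path // Ls Ls'.
Qed.

End ArcLength.

Section MinkowskiPath.
Variables (R : realType) (n : nat) (X : set 'rV[R]_n) (I : 'I_n -> interval R).
Variables (x x' y y' : 'rV[R]_n) (gamma : R -> 'rV[R]_n).
Hypotheses (gamma_geod : l1_geodesic X x x' gamma) (y_in : box I y) (y'_in : box I y').

Let D := l1dist x x'.
Let p j s := gamma (s * D) ord0 j.

Definition minkowski_path s :=
  gamma (s * D) + \row_j compensating_path (p j) (y ord0 j) (y' ord0 j) s.

Let scale_in t : 0 <= t <= 1 -> 0 <= t * D <= D.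
Proof.
by move=> /andP[t0 t1]; rewrite mulr_ge0 ?ler_piMl ?l1dist_ge0.
Qed.

Let p_mono j : monotone_on 0 1 (p j).
Proof.
exact: monotone_on_scale (l1dist_ge0 _ _) (l1_geodesic_monotone_coord j gamma_geod).
Qed.

Lemma minkowski_path0 : minkowski_path 0 = x + y.
Proof.
have [gamma0 _] := gamma_geod.
by apply/rowP => j; rewrite !mxE compensating_path0 /p mul0r gamma0.
Qed.

Lemma minkowski_path1 : minkowski_path 1 = x' + y'.
Proof.
have [_ [gammaD _]] := gamma_geod.
by apply/rowP => j; rewrite !mxE compensating_path1 /p mul1r gammaD.
Qed.

Lemma minkowski_path_in s :
  0 <= s <= 1 -> minkowski_sum X (box I) (minkowski_path s).
Proof.
move=> s01; have [_ [_ [gamma_in _]]] := gamma_geod.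
exists (gamma (s * D)), (\row_j compensating_path (p j) (y ord0 j) (y' ord0 j) s).
split; first exact/gamma_in/scale_in.
split=> // j; rewrite mxE.
exact: between_in_itv (y_in j) (y'_in j) (compensating_path_between _ _ (p_mono j) s01).
Qed.

Lemma minkowski_path_monotone j :
  monotone_on 0 1 (fun s => minkowski_path s ord0 j).
Proof.
move=> t1 t2 t3 t10 t12 t23 t31; rewrite !mxE.
exact: (monotone_on_add_compensating_path (y ord0 j) (y' ord0 j) (p_mono j)
  t10 t12 t23 t31).
Qed.

Lemma minkowski_path_lipschitz : exists K, forall s s', 0 <= s <= 1 -> 0 <= s' <= 1 ->
  l1dist (minkowski_path s) (minkowski_path s') <= K * `|s - s'|.
Proof.
have [_ [_ [_ gamma_dist]]] := gamma_geod.
pose r j := y' ord0 j - y ord0 j - clamp (y' ord0 j - y ord0 j) (p j 0 - p j 1).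
exists (2 * D + \sum_j `|r j|) => s s' s01 s'01.
have coord j : `|minkowski_path s ord0 j - minkowski_path s' ord0 j| <=
    2 * `|p j s - p j s'| + `|r j| * `|s - s'|.
  have := compensating_path_dist (p j) (y ord0 j) (y' ord0 j) s s'.
  rewrite !mxE -/(p j s) -/(p j s') -/(r j).
  set q := compensating_path _ _ _.
  have := ler_normD (p j s - p j s') (q s - q s').
  have -> : p j s - p j s' + (q s - q s') = p j s + q s - (p j s' + q s') by ring.
  lra.
have gamma_sum : \sum_j `|p j s - p j s'| = D * `|s - s'|.
  rewrite -[LHS]/(l1dist _ _) gamma_dist ?scale_in // -mulrBl normrM.
  by rewrite (ger0_norm (l1dist_ge0 x x')) mulrC.
apply: le_trans (ler_sum _ (fun j _ => coord j)) _.
by rewrite big_split /= -mulr_sumr -mulr_suml gamma_sum mulrA -mulrDl.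
Qed.

End MinkowskiPath.

Theorem proposition2p3 (R : realType) (n : nat) (X : set 'rV[R]_n)
    (I : 'I_n -> interval R) :
  closed X -> l1_convex X -> l1_convex (minkowski_sum X (box I)).
Proof.
move=> _ X_convex _ _ [x [y [Xx [Iy ->]]]] [x' [y' [Xx' [Iy' ->]]]].
have [gamma gamma_geod] := X_convex x x' Xx Xx'.
have [K w_lip] := minkowski_path_lipschitz y y' gamma_geod.
rewrite -(minkowski_path0 y y' gamma_geod) -(minkowski_path1 y y' gamma_geod).
apply: (monotone_path_l1_geodesic _ w_lip).
- move=> j; exact: (minkowski_path_monotone y y' gamma_geod j).
- move=> s; exact: (minkowski_path_in gamma_geod Iy Iy').
Qed.
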